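(* Let $\alpha\in(0,1]$, let $F\in C^{1,\alpha}_{\mathsf h}(\mathbb H,\mathbb R^2)$, let $p\in\mathbb H$ be a nondegenerate point for $F$, let $I\subseteq\mathbb R$ be an interval and let $\gamma:I\to\mathbb H$ be a solution to the level set differential equation (LSDE) associated to $F$ and $p$. Then there exist $\delta>0$ and $\varrho>0$ such that $$|t-s|^{1/2}\le \varrho\,\mathsf d(\gamma_s,\gamma_t)\quad\text{for all } s,t\in I \text{ with } |t-s|\le 2\delta.$$
   Context: The Heisenberg group $\mathbb H$ is $\mathbb R^3$ with product $(x^1,x^2,x^3)(y^1,y^2,y^3)=(x^1+y^1,x^2+y^2,x^3+y^3+x^1y^2-x^2y^1)$ (identity $0$, inverse $x^{-1}=-x$). For $x\in\mathbb H$ write $x^{\mathsf h}=(x^1,x^2)\in\mathbb R^2$, $x^{\mathsf v}=x^3$, $[x]^{\mathsf h}=|x^{\mathsf h}|$, $[x]^{\mathsf v}=\sqrt{|x^3|}$. Dilations are $\delta_r(x)=(rx^1,rx^2,r^2x^3)$. $\mathsf d$ is a fixed distance on $\mathbb H$ which is left-invariant ($\mathsf d(zx,zy)=\mathsf d(x,y)$) and $1$-homogeneous ($\mathsf d(\delta_rx,\delta_ry)=r\,\mathsf d(x,y)$); $B(x,r)$ denotes the open $\mathsf d$-ball. Horizontal vector fields: $X_1=\partial_1-x^2\partial_3$, $X_2=\partial_2+x^1\partial_3$. For $\alpha\in(0,1]$, $C^{1,\alpha}_{\mathsf h}(\mathbb H,\mathbb R^k)$ is the set of $F:\mathbb H\to\mathbb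 R^k$ such that $X_1F,X_2F$ exist everywhere and the horizontal Jacobian $\nabla_{\mathsf h}F=[X_1F,X_2F]$ (a $k\times2$ matrix) is $\alpha$-Hölder with respect to $\mathsf d$ on every bounded set. A point $p$ is nondegenerate for $F:\mathbb H\to\mathbb R^2$ if $\nabla_{\mathsf h}F(p)$ is invertible. Set $\mathrm R(x,y):=F(y)-F(x)-\nabla_{\mathsf h}F(x)\,(x^{-1}y)^{\mathsf h}$. LSDE: given $F\in C^{1,\alpha}_{\mathsf h}(\mathbb H,\mathbb R^2)$, $p$ nondegenerate and an interval $I$, a continuous $\gamma:I\to\mathbb H$ is a solution if for all $s,t\in I$: $(\gamma_s^{-1}\gamma_t)^{\mathsf h}=-\nabla_{\mathsf h}F(p)^{-1}(\mathrm R(p,\gamma_t)-\mathrm R(p,\gamma_s))$ and $(\gamma_s^{-1}\gamma_t)^{\mathsf v}=t-s+\mathbb E_{st}$, where $\mathbb E:I^2\to\mathbb R$ satisfies $\|\mathbb E\|:=\sup_{s\neq t}|\mathbb E_{st}|/|t-s|^{1+\alpha}<\infty$. *)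

From Stdlib Require Import Reals Lra.
Open Scope R_scope.

Record Hpt : Type := mkH { h1 : R; h2 : R; h3 : R }.

Definition hmul (x y : Hpt) : Hpt :=
  mkH (h1 x + h1 y) (h2 x + h2 y) (h3 x + h3 y + h1 x * h2 y - h2 x * h1 y).
Definition hinv (x : Hpt) : Hpt := mkH (- h1 x) (- h2 x) (- h3 x).
Definition h0 : Hpt := mkH 0 0 0.
Definition dil (r : R) (x : Hpt) : Hpt := mkH (r * h1 x) (r * h2 x) (r * r * h3 x).

Definition is_hom_distance (d : Hpt -> Hpt -> R) : Prop :=
  (forall x y, 0 <= d x y) /\
  (forall x y, d x y = 0 <-> x = y) /\
  (forall x y, d x y = d y x) /\
  (forall x y z, d x z <= d x y + d y z) /\
  (forall z x y, d (hmul z x) (hmul z y) = d x y) /\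
  (forall r x y, 0 < r -> d (dil r x) (dil r y) = r * d x y).

(* real power with the convention 0^a = 0 for a > 0 *)
Definition rpow (x a : R) : R := if Rle_dec x 0 then 0 else Rpower x a.

Definition map2 := Hpt -> (R * R)%type.

(* Horizontal derivatives: X1 G(x) = d/dt G(x (t,0,0)) at t=0,
   X2 G(x) = d/dt G(x (0,t,0)) at t=0 (these agree with
   X1 = d1 - x2 d3, X2 = d2 + x1 d3). *)
Definition is_X1 (G : Hpt -> R) (x : Hpt) (l : R) : Prop :=
  derivable_pt_lim (fun t => G (hmul x (mkH t 0 0))) 0 l.
Definition is_X2 (G : Hpt -> R) (x : Hpt) (l : R) : Prop :=
  derivable_pt_lim (fun t => G (hmul x (mkH 0 t 0))) 0 l.

Record mat2 : Type := mkM { m11 : R; m12 : R; m21 : R; m22 : R }.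

Definition is_hjac (F : map2) (J : Hpt -> mat2) : Prop :=
  forall x,
    is_X1 (fun y => fst (F y)) x (m11 (J x)) /\
    is_X2 (fun y => fst (F y)) x (m12 (J x)) /\
    is_X1 (fun y => snd (F y)) x (m21 (J x)) /\
    is_X2 (fun y => snd (F y)) x (m22 (J x)).

(* C^{1,alpha}_h(H,R^2), with J the horizontal Jacobian: J is alpha-Hoelder
   w.r.t. d on every bounded set (every d-ball centred at 0). *)
Definition C1alpha_h (d : Hpt -> Hpt -> R) (alpha : R) (F : map2) (J : Hpt -> mat2) : Prop :=
  is_hjac F J /\
  forall Rad, 0 < Rad -> exists C, forall x y, d h0 x < Rad -> d h0 y < Rad ->
     Rabs (m11 (J x) - m11 (J y)) <= C * rpow (d x y) alpha /\
     Rabs (m12 (J x) - m12 (J y)) <= C * rpow (d x y) alpha /\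
     Rabs (m21 (J x) - m21 (J y)) <= C * rpow (d x y) alpha /\
     Rabs (m22 (J x) - m22 (J y)) <= C * rpow (d x y) alpha.

Definition det2 (M : mat2) : R := m11 M * m22 M - m12 M * m21 M.
Definition nondegenerate (J : Hpt -> mat2) (p : Hpt) : Prop := det2 (J p) <> 0.

Definition mapply (M : mat2) (v : R * R) : R * R :=
  (m11 M * fst v + m12 M * snd v, m21 M * fst v + m22 M * snd v).
Definition minv (M : mat2) : mat2 :=
  mkM (m22 M / det2 M) (- m12 M / det2 M) (- m21 M / det2 M) (m11 M / det2 M).

Definition vsub (u v : R * R) : R * R := (fst u - fst v, snd u - snd v).
Definition vopp (u : R * R) : R * R := (- fst u, - snd u).
Definition hpart (x : Hpt) : R * R := (h1 x, h2 x).

Definition Rem (F : map2) (J : Hpt -> mat2) (x y : Hpt) : R * R :=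
  vsub (vsub (F y) (F x)) (mapply (J x) (hpart (hmul (hinv x) y))).

Definition is_interval (I : R -> Prop) : Prop :=
  forall a b c, I a -> I c -> a <= b <= c -> I b.

Definition cont_on (I : R -> Prop) (g : R -> Hpt) : Prop :=
  forall t, I t -> forall eps, 0 < eps -> exists del, 0 < del /\
    forall s, I s -> Rabs (s - t) < del ->
      Rabs (h1 (g s) - h1 (g t)) < eps /\ Rabs (h2 (g s) - h2 (g t)) < eps /\
      Rabs (h3 (g s) - h3 (g t)) < eps.

Definition LSDE_solution (alpha : R) (F : map2) (J : Hpt -> mat2) (p : Hpt)
    (I : R -> Prop) (g : R -> Hpt) : Prop :=
  cont_on I g /\
  exists E : R -> R -> R,
    (exists M, forall s t, I s -> I t -> s <> t ->
        Rabs (E s t) / rpow (Rabs (t - s)) (1 + alpha) <= M) /\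
    forall s t, I s -> I t ->
      hpart (hmul (hinv (g s)) (g t)) =
        vopp (mapply (minv (J p)) (vsub (Rem F J p (g t)) (Rem F J p (g s)))) /\
      h3 (hmul (hinv (g s)) (g t)) = t - s + E s t.

(* Along a solution, (γ_s^{-1} γ_t)^v = t - s + E_st with |E_st| ≤ M |t-s|^{1+α}, so for
   |t-s| small the vertical part of γ_s^{-1} γ_t is at least |t-s|/2.  For any homogeneous
   left-invariant distance, d(0,w) dominates sqrt|w^v|: indeed w·w and δ_2 w differ by the
   central element (0,0,2 w^v), whose distance from 0 is sqrt(2|w^v|) d(0,e_3). *)
From Stdlib Require Import Reals Lra.
Open Scope R_scope.

Definition e3 : Hpt := mkH 0 0 1.

Lemma hmul_hinv_l x : hmul (hinv x) x = h0.
Proof. destruct x; unfold hmul, hinv, h0; simpl; f_equal; ring. Qed.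

Lemma hmul_h0_r x : hmul x h0 = x.
Proof. destruct x; unfold hmul, h0; simpl; f_equal; ring. Qed.

Lemma dil_h0 r : dil r h0 = h0.
Proof. unfold dil, h0; simpl; f_equal; ring. Qed.

Lemma dil_vertical r t : dil r (mkH 0 0 t) = mkH 0 0 (r * r * t).
Proof. unfold dil; simpl; f_equal; ring. Qed.

Lemma hmul_hinv_sq_dil2 w : hmul (hinv (hmul w w)) (dil 2 w) = mkH 0 0 (2 * h3 w).
Proof. destruct w; unfold hmul, hinv, dil; simpl; f_equal; ring. Qed.

Section HomogeneousDistance.
Variable d : Hpt -> Hpt -> R.
Hypothesis Hd : is_hom_distance d.

Lemma dist_left_inv x y : d x y = d h0 (hmul (hinv x) y).
Proof.
  destruct Hd as (_ & _ & _ & _ & Hleft & _).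
  now rewrite <- (Hleft (hinv x) x y), hmul_hinv_l.
Qed.

Lemma dist_h0_e3_pos : 0 < d h0 e3.
Proof.
  destruct Hd as (Hnonneg & Hsep & _).
  destruct (Hnonneg h0 e3) as [Hlt | Heq]; [exact Hlt |].
  symmetry in Heq; apply Hsep in Heq.
  unfold h0, e3 in Heq; injection Heq; lra.
Qed.

Lemma dist_h0_dil r x : 0 < r -> d h0 (dil r x) = r * d h0 x.
Proof.
  destruct Hd as (_ & _ & _ & _ & _ & Hhom).
  intro Hr; rewrite <- (dil_h0 r) at 1; now apply Hhom.
Qed.

Lemma dist_h0_vertical_neg1 : d h0 (mkH 0 0 (-1)) = d h0 e3.
Proof.
  destruct Hd as (_ & _ & Hsym & _ & Hleft & _).
  rewrite <- (Hleft e3 h0 (mkH 0 0 (-1))), hmul_h0_r.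
  replace (hmul e3 (mkH 0 0 (-1))) with h0 by (unfold hmul, e3, h0; simpl; f_equal; ring).
  apply Hsym.
Qed.

Lemma dist_h0_vertical t : d h0 (mkH 0 0 t) = sqrt (Rabs t) * d h0 e3.
Proof.
  destruct (Rtotal_order t 0) as [Hneg | [-> | Hpos]].
  - assert (Hr : 0 < sqrt (- t)) by (apply sqrt_lt_R0; lra).
    replace (mkH 0 0 t) with (dil (sqrt (- t)) (mkH 0 0 (-1)))
      by (rewrite dil_vertical, sqrt_sqrt by lra; f_equal; ring).
    now rewrite dist_h0_dil, dist_h0_vertical_neg1, Rabs_left.
  - rewrite Rabs_R0, sqrt_0, Rmult_0_l.
    now apply (proj1 (proj2 Hd)).
  - assert (Hr : 0 < sqrt t) by (apply sqrt_lt_R0; lra).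
    replace (mkH 0 0 t) with (dil (sqrt t) e3)
      by (unfold e3; rewrite dil_vertical, sqrt_sqrt by lra; f_equal; ring).
    now rewrite dist_h0_dil, Rabs_right by lra.
Qed.

Lemma sqrt_vertical_le_dist_h0 w : sqrt (2 * Rabs (h3 w)) * d h0 e3 <= 4 * d h0 w.
Proof.
  destruct Hd as (_ & _ & Hsym & Htri & Hleft & _).
  assert (Hsq : d h0 (hmul w w) <= 2 * d h0 w).
  { assert (d w (hmul w w) = d h0 w) by now rewrite <- (Hleft w h0 w), hmul_h0_r.
    pose proof (Htri h0 w (hmul w w)); lra. }
  assert (Hdil : d h0 (dil 2 w) = 2 * d h0 w) by (apply dist_h0_dil; lra).
  assert (Hdiff : d (hmul w w) (dil 2 w) <= 4 * d h0 w).
  { pose proof (Htri (hmul w w) h0 (dil 2 w)).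
    rewrite (Hsym (hmul w w) h0) in *; lra. }
  rewrite dist_left_inv, hmul_hinv_sq_dil2, dist_h0_vertical in Hdiff.
  now rewrite Rabs_mult, (Rabs_right 2) in Hdiff by lra.
Qed.

Lemma sqrt_le_dist_of_vertical x y u :
  u <= 2 * Rabs (h3 (hmul (hinv x) y))  ->
  sqrt u <= 4 / d h0 e3 * d x y.
Proof.
  intro Hu.
  pose proof dist_h0_e3_pos as Hk.
  apply Rle_trans with (sqrt (2 * Rabs (h3 (hmul (hinv x) y)))); [now apply sqrt_le_1_alt |].
  apply (Rmult_le_reg_r (d h0 e3)); [exact Hk |].
  rewrite (dist_left_inv x y).
  replace (4 / d h0 e3 * d h0 (hmul (hinv x) y) * d h0 e3)
    with (4 * d h0 (hmul (hinv x) y)) by (field; lra).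
  apply sqrt_vertical_le_dist_h0.
Qed.

End HomogeneousDistance.

(* Witness: delta = (2 max(M,1))^{-1/α}, so that M u^α ≤ 1/2 for u ≤ delta. *)
Lemma superlinear_error_small a M :
  0 < a ->
  exists delta, 0 < delta /\
    forall u, 0 < u <= delta -> M * Rpower u (1 + a) <= u / 2.
Proof.
  intro Ha.
  set (M' := Rmax M 1).
  assert (HM : M <= M') by apply Rmax_l.
  assert (HM' : 0 < M') by (pose proof (Rmax_r M 1); unfold M'; lra).
  set (x := / (2 * M')).
  assert (Hx : 0 < x) by (apply Rinv_0_lt_compat; lra).
  exists (Rpower x (/ a)); split; [apply exp_pos |].
  intros u [Hu Hle].
  assert (Hpow : Rpower u a <= x).
  { replace x with (Rpower (Rpower x (/ a)) a)
      by (rewrite Rpower_mult, Rinv_l, Rpower_1 by lra; reflexivity).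
    apply Rle_Rpower_l; lra. }
  assert (Hpa : 0 < Rpower u a) by apply exp_pos.
  rewrite Rpower_plus, Rpower_1 by exact Hu.
  apply Rle_trans with (M' * (u * x)).
  - apply Rle_trans with (M' * (u * Rpower u a)).
    + apply Rmult_le_compat_r; [apply Rmult_le_pos|]; lra.
    + apply Rmult_le_compat_l; [lra |]; apply Rmult_le_compat_l; lra.
  - right; unfold x; field; lra.
Qed.

Lemma vertical_part_large s t e a M :
  0 < Rabs (t - s) ->
  Rabs e / rpow (Rabs (t - s)) (1 + a) <= M ->
  M * Rpower (Rabs (t - s)) (1 + a) <= Rabs (t - s) / 2 ->
  Rabs (t - s) <= 2 * Rabs (t - s + e).
Proof.
  intros Hu He Hsmall.
  unfold rpow in He; destruct (Rle_dec (Rabs (t - s)) 0) as [Hle | _]; [lra |].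
  assert (Hp : 0 < Rpower (Rabs (t - s)) (1 + a)) by apply exp_pos.
  assert (Hebound : Rabs e <= M * Rpower (Rabs (t - s)) (1 + a)).
  { apply (Rmult_le_compat_r (Rpower (Rabs (t - s)) (1 + a))) in He; [| lra].
    unfold Rdiv in He; rewrite Rmult_assoc, Rinv_l, Rmult_1_r in He; lra. }
  pose proof (Rabs_triang_inv (t - s) (- e)) as Htri.
  rewrite Rabs_Ropp in Htri.
  replace (t - s - - e) with (t - s + e) in Htri by ring.
  lra.
Qed.

Theorem mainTheorem1 :
  forall (d : Hpt -> Hpt -> R) (alpha : R) (F : map2) (J : Hpt -> mat2)
         (p : Hpt) (I : R -> Prop) (g : R -> Hpt),
    is_hom_distance d ->
    0 < alpha <= 1 ->
    C1alpha_h d alpha F J ->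
    nondegenerate J p ->
    is_interval I ->
    LSDE_solution alpha F J p I g ->
    exists delta rho, 0 < delta /\ 0 < rho /\
      forall s t, I s -> I t -> Rabs (t - s) <= 2 * delta ->
        sqrt (Rabs (t - s)) <= rho * d (g s) (g t).
Proof.
  intros d alpha F J p I g Hd Ha _ _ _ [_ [E [[M HM] HE]]].
  pose proof (dist_h0_e3_pos d Hd) as Hk.
  destruct (superlinear_error_small alpha M (proj1 Ha)) as [delta [Hdelta Hsmall]].
  exists (delta / 2), (4 / d h0 e3).
  split; [lra |]; split; [apply Rdiv_lt_0_compat; lra |].
  intros s t Is It Hst.
  destruct (Req_dec s t) as [-> | Hne].
  - rewrite Rminus_diag, Rabs_R0, sqrt_0.
    apply Rmult_le_pos; [left; apply Rdiv_lt_0_compat; lra | apply (proj1 Hd)].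
  - assert (Hu : 0 < Rabs (t - s)) by (apply Rabs_pos_lt; lra).
    apply (sqrt_le_dist_of_vertical d Hd).
    rewrite (proj2 (HE s t Is It)).
    apply (vertical_part_large s t (E s t) alpha M); auto.
    apply Hsmall; lra.
Qed.
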